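(* Let $G\subset GL(V)$ be a reflection group. The following are equivalent: (1) $\ell(g)=\operatorname{codim}(g)$ for every $g\in G$; (2) $\ell(g)=\operatorname{codim}(g)$ for every codimension atom $g\in G$; (3) every codimension atom of $G$ is a reflection; (4) for every $g\neq 1$ in $G$ there exists a reflection $s\in G$ such that $\operatorname{codim}(gs)<\operatorname{codim}(g)$.
   Context: $V$ is a finite-dimensional vector space of dimension $n$ over $\mathbb{R}$ or $\mathbb{C}$. A reflection is an element of $GL(V)$ of finite order fixing a hyperplane pointwise; a reflection group is a finite subgroup of $GL(V)$ generated by reflections. $\ell(g)$ is the minimal number of reflections of $G$ whose product is $g$ ($\ell(1)=0$). $\operatorname{codim}(g)=n-\dim\{v\in V:gv=v\}$. The codimension order is the partial order on $G$ given by $a\le_\perp c$ iff $\operatorname{codim}(a)+\operatorname{codim}(a^{-1}c)=\operatorname{codim}(c)$; a codimension atom is an element covering the identity $1$ (the minimum) in this poset. *)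

From mathcomp Require Import all_boot all_order all_algebra.
From mathcomp Require Import complex.
From mathcomp Require Import reals.
Set Implicit Arguments. Unset Strict Implicit. Unset Printing Implicit Defensive.
Import Order.TTheory GRing.Theory Num.Theory.
Local Open Scope ring_scope.

(* V = row vectors 'rV[F]_n; a matrix g acts by v |-> v *m g.
   A finite subgroup of GL(V) is given by the finite list G of its elements. *)

Section Defs.
Variables (F : fieldType) (n : nat).
Implicit Types (g h : 'M[F]_n) (G : seq 'M[F]_n).

Definition fixspace g : 'M[F]_n := kermx (g - 1%:M).

Definition codim g : nat := (n - \rank (fixspace g))%N.

Definition is_reflection g : Prop :=
  g \in unitmx /\ (exists k, (0 < k)%N /\ iter k (mulmx g) 1%:M = 1%:M) /\ g != 1%:M /\
  exists H : 'M[F]_n, \rank H = n.-1 /\ (H <= fixspace g)%MS.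

Definition is_finite_subgroup G : Prop :=
  1%:M \in G /\ (forall g, g \in G -> g \in unitmx) /\
  (forall g h, g \in G -> h \in G -> g *m h \in G) /\
  (forall g, g \in G -> invmx g \in G).

Definition refl_factorization G g (s : seq 'M[F]_n) : Prop :=
  (forall r, r \in s -> r \in G /\ is_reflection r) /\
  g = foldr (fun r acc => r *m acc) 1%:M s.

Definition is_reflection_group G : Prop :=
  is_finite_subgroup G /\
  forall g, g \in G -> exists s, refl_factorization G g s.

Definition refl_length_is G g (k : nat) : Prop :=
  (exists s, refl_factorization G g s /\ size s = k) /\
  (forall s, refl_factorization G g s -> (k <= size s)%N).

Definition codim_le a c : Prop := (codim a + codim (invmx a *m c))%N = codim c.

Definition codim_atom G g : Prop :=
  g \in G /\ g != 1%:M /\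
  forall h, h \in G -> codim_le 1%:M h -> codim_le h g -> h = 1%:M \/ h = g.

Definition TFAE_thm4 G : Prop :=
  is_reflection_group G ->
  [/\ ((forall g, g \in G -> refl_length_is G g (codim g)) <->
       (forall g, codim_atom G g -> refl_length_is G g (codim g))),
      ((forall g, codim_atom G g -> refl_length_is G g (codim g)) <->
       (forall g, codim_atom G g -> is_reflection g)) &
      ((forall g, codim_atom G g -> is_reflection g) <->
       (forall g, g \in G -> g != 1%:M ->
          exists2 s, s \in G /\ is_reflection s & (codim (g *m s) < codim g)%N))].

End Defs.

From mathcomp Require Import all_boot all_order all_algebra.
From mathcomp Require Import complex reals.
From mathcomp Require Import zify.
Set Implicit Arguments. Unset Strict Implicit. Unset Printing Implicit Defensive.
Import GRing.Theory.
Local Open Scope ring_scope.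

(* codim g is the rank of g - 1, so it is subadditive and codim (a^-1 b) =
   rank (b - a); a reflection has codim 1, hence a product of k reflections has
   codim <= k.  (4) peels off one reflection at a time while lowering codim by
   one, which gives (1).  An atom a below g^-1 satisfies codim a + codim (g a) =
   codim g, so (3) gives (4).  If an atom g = r * rest is a product of codim g
   reflections, then r <= g in the codimension order, so r = g, giving (2) => (3). *)

Local Notation mxprod s := (foldr (fun r acc => r *m acc) 1%:M s).

Section Codim.
Variables (F : fieldType) (n : nat).
Implicit Types (a b g r : 'M[F]_n) (G s : seq 'M[F]_n).

Lemma mxrank_unitl m (U : 'M[F]_n) (A : 'M[F]_(n, m)) :
  U \in unitmx -> \rank (U *m A) = \rank A.
Proof.
move=> Uu; apply/eqP; rewrite eqn_leq mxrankM_maxr /=.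
by rewrite -{1}(mulKmx Uu A) mxrankM_maxr.
Qed.

Lemma codimE g : codim g = \rank (g - 1%:M).
Proof. by rewrite /codim /fixspace mxrank_ker; have := rank_leq_col (g - 1%:M); lia. Qed.

Lemma codim1 : codim (1%:M : 'M[F]_n) = 0%N.
Proof. by rewrite codimE subrr mxrank0. Qed.

Lemma codim_eq0 g : (codim g == 0%N) = (g == 1%:M).
Proof. by rewrite codimE mxrank_eq0 subr_eq0. Qed.

Lemma codim_gt0 g : g != 1%:M -> (0 < codim g)%N.
Proof. by rewrite lt0n codim_eq0. Qed.

Lemma codimM a b : (codim (a *m b) <= codim a + codim b)%N.
Proof.
rewrite !codimE.
have -> : a *m b - 1%:M = (a - 1%:M) *m b + (b - 1%:M).
  by rewrite mulmxBl mul1mx addrA subrK.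
by apply: leq_trans (mxrank_add _ _) _; rewrite leq_add2r mxrankM_maxl.
Qed.

Lemma codim_invmxM a b : a \in unitmx -> codim (invmx a *m b) = \rank (b - a).
Proof.
move=> au; rewrite codimE.
have -> : invmx a *m b - 1%:M = invmx a *m (b - a) by rewrite mulmxBr mulVmx.
by rewrite mxrank_unitl // unitmx_inv.
Qed.

Lemma codim_invmxMC a b : a \in unitmx -> b \in unitmx ->
  codim (invmx a *m b) = codim (invmx b *m a).
Proof. by move=> au bu; rewrite !codim_invmxM // -mxrank_opp opprB. Qed.

Lemma codimV a : a \in unitmx -> codim (invmx a) = codim a.
Proof. by move=> au; rewrite -[invmx a]mulmx1 codim_invmxMC ?unitmx1 // invmx1 mul1mx. Qed.

Lemma codim_reflection r : is_reflection r -> codim r = 1%N.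
Proof.
move=> [_ [_ [r1 [H [rankH sH]]]]].
by have := codim_gt0 r1; have := mxrankS sH; rewrite rankH /codim; lia.
Qed.

Lemma refl_factorization_cons G g r s : refl_factorization G g (r :: s) ->
  [/\ r \in G, is_reflection r, g = r *m mxprod s & refl_factorization G (mxprod s) s].
Proof.
move=> [sR ->]; have [rG rR] := sR r (mem_head _ _).
by split=> //; split=> // x xs; apply: sR; rewrite in_cons xs orbT.
Qed.

Lemma codim_le_size G g s : refl_factorization G g s -> (codim g <= size s)%N.
Proof.
elim: s g => [|r s IHs] g; first by move=> [_ ->]; rewrite codim1.
move=> /refl_factorization_cons[_ rR -> fs]; apply: leq_trans (codimM _ _) _.
by rewrite codim_reflection // add1n ltnS IHs.
Qed.

End Codim.

Section ReflectionGroup.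
Variables (F : fieldType) (n : nat) (G : seq 'M[F]_n).
Hypothesis finG : is_finite_subgroup G.
Implicit Types (a b g h k : 'M[F]_n).

Lemma unitmx_G g : g \in G -> g \in unitmx.
Proof. by case: finG => _ [+ _]; apply. Qed.

Lemma mulmx_G g h : g \in G -> h \in G -> g *m h \in G.
Proof. by case: finG => _ [_ [+ _]]; apply. Qed.

Lemma invmx_G g : g \in G -> invmx g \in G.
Proof. by case: finG => _ [_ [_]]; apply. Qed.

Lemma invmx_neq1 g : g != 1%:M -> invmx g != 1%:M.
Proof. by apply: contraNneq => g1; rewrite -[g]invmxK g1 invmx1. Qed.

Lemma codim_le_trans k h g : k \in G -> h \in G ->
  codim_le k h -> codim_le h g -> codim_le k g.
Proof.
rewrite /codim_le => kG hG kh hg.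
have kg : (invmx k *m h) *m (invmx h *m g) = invmx k *m g.
  by rewrite mulmxA mulmxK ?unitmx_G.
have := codimM (invmx k *m h) (invmx h *m g).
have := codimM k (invmx k *m g).
by rewrite kg mulKVmx ?unitmx_G //; lia.
Qed.

Lemma codim_lt_of_le k h : k \in G -> k != h -> codim_le k h -> (codim k < codim h)%N.
Proof.
move=> kG kh; rewrite /codim_le codim_invmxM ?unitmx_G //.
have : (0 < \rank (h - k)%R)%N by rewrite lt0n mxrank_eq0 subr_eq0 eq_sym.
lia.
Qed.

(* A nonidentity element of minimal codimension below g is an atom. *)
Lemma codim_atom_below g : g \in G -> g != 1%:M ->
  exists2 a, codim_atom G a & codim_le a g.
Proof.
move=> gG g1.
pose below h := [&& h \in G, h != 1%:M & codim h + codim (invmx h *m g) == codim g]%N.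
have ex_m : exists m, has (fun h => below h && (codim h == m)) G.
  exists (codim g); apply/hasP; exists g => //.
  by rewrite /below gG g1 mulVmx ?unitmx_G // codim1 addn0 !eqxx.
case: (ex_minnP ex_m) => m /hasP[a _ /andP[/and3P[aG a1 /eqP ag] /eqP am]] min_m.
exists a => //; do 2!split=> //; move=> k kG _ ka.
have [-> | k1] := eqVneq k 1%:M; first by left.
have [-> | /(codim_lt_of_le kG)/(_ ka) lt_ka] := eqVneq k a; first by right.
suff : (m <= codim k)%N by rewrite -am leqNgt lt_ka.
apply: min_m; apply/hasP; exists k => //.
by rewrite /below kG k1 eqxx andbT; apply/eqP; apply: codim_le_trans ka ag.
Qed.

Definition length_is_codim := forall g, g \in G -> refl_length_is G g (codim g).
Definition atom_length_is_codim := forall g, codim_atom G g -> refl_length_is G g (codim g).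
Definition atoms_are_reflections := forall g, codim_atom G g -> is_reflection g.
Definition codim_descends := forall g, g \in G -> g != 1%:M ->
  exists2 s, s \in G /\ is_reflection s & (codim (g *m s) < codim g)%N.

Lemma length_is_codim_atom : length_is_codim -> atom_length_is_codim.
Proof. by move=> len g [gG _]; apply: len. Qed.

Lemma atom_length_reflection : atom_length_is_codim -> atoms_are_reflections.
Proof.
move=> len g atom_g; have [gG [g1 min_g]] := atom_g.
have [[s [fs size_s]] _] := len g atom_g.
case: s size_s fs => [|r s] /= size_s; first by move=> [_ g1']; rewrite g1' eqxx in g1.
move=> /refl_factorization_cons[rG rR def_g fs].
have r_le_g : codim_le r g.
  have := codimM r (mxprod s); have := codim_le_size fs.
  rewrite /codim_le (codim_reflection rR) -def_g {2}def_g mulKmx ?unitmx_G //.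
  by move=> le_s le_g; apply/eqP; rewrite eqn_leq le_g -size_s add1n ltnS le_s.
have r1 : codim_le 1%:M r by rewrite /codim_le invmx1 mul1mx codim1.
case: (min_g r rG r1 r_le_g) => [r_eq1 | <-] //.
by case: rR => _ [_ [+ _]]; rewrite r_eq1 eqxx.
Qed.

Lemma reflection_codim_descends : atoms_are_reflections -> codim_descends.
Proof.
move=> atomR g gG g1.
have [a atom_a a_le] := codim_atom_below (invmx_G gG) (invmx_neq1 g1).
have [aG [a1 _]] := atom_a.
exists a; first by split=> //; apply: atomR.
move: a_le; rewrite /codim_le codimV ?unitmx_G //.
rewrite codim_invmxMC ?unitmx_inv ?unitmx_G // invmxK => <-.
by rewrite -{1}[codim (g *m a)]add0n ltn_add2r codim_gt0.
Qed.

(* Peel off s^-1 g, whose codim is codim (g^-1 s) < codim g. *)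
Lemma codim_descends_length : codim_descends -> length_is_codim.
Proof.
move=> desc.
suff short g : g \in G -> exists2 s, refl_factorization G g s & (size s <= codim g)%N.
  move=> g /short[s fs size_s]; split=> [|t]; last exact: codim_le_size.
  by exists s; split=> //; apply/eqP; rewrite eqn_leq size_s (codim_le_size fs).
elim: {g}(codim g) {-2}g (leqnn (codim g)) => [|m IHm] g.
  by rewrite leqn0 codim_eq0 => /eqP-> _; exists [::].
move=> gm gG; have [-> | g1] := eqVneq g 1%:M; first by exists [::].
have [s [sG sR] lt_s] := desc _ (invmx_G gG) (invmx_neq1 g1).
have hG : invmx s *m g \in G by rewrite mulmx_G ?invmx_G.
have codim_h : codim (invmx s *m g) = codim (invmx g *m s).
  by rewrite codim_invmxMC ?unitmx_G.
rewrite codimV ?unitmx_G // -codim_h in lt_s.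
have [t [tR def_h] size_t] := IHm _ (leq_trans lt_s gm) hG.
exists (s :: t); last exact: leq_ltn_trans size_t lt_s.
split=> [x|]; first by rewrite in_cons => /orP[/eqP-> | /tR].
by rewrite /= -def_h mulKVmx ?unitmx_G.
Qed.

End ReflectionGroup.

Theorem reflection_group_TFAE (F : fieldType) (n : nat) (G : seq 'M[F]_n) : TFAE_thm4 G.
Proof.
move=> [finG _].
have L12 : length_is_codim G -> atom_length_is_codim G := @length_is_codim_atom _ _ G.
have L23 := atom_length_reflection finG.
have L34 := reflection_codim_descends finG.
have L41 := codim_descends_length finG.
split; split=> [H | H].
- exact (L12 H).
- exact (L41 (L34 (L23 H))).
- exact (L23 H).
- exact (L12 (L41 (L34 H))).
- exact (L34 H).
- exact (L23 (L12 (L41 H))).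
Qed.

Theorem mainTheorem4 (R : realType) (n : nat) :
  (forall G : seq 'M[R]_n, TFAE_thm4 G) /\
  (forall G : seq 'M[R[i]]_n, TFAE_thm4 G).
Proof. by split=> G; apply: reflection_group_TFAE. Qed.
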